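(* Suppose Assumptions 1 and 2 hold. Consider the doubling-trick scheme: the rounds $1,2,3,\ldots$ are partitioned into consecutive periods $i=1,2,\ldots$, period $i$ consisting of $2^i$ rounds; in period $i$ a fresh copy of Algorithm 1 is run with horizon $2^i$, i.e. with $\gamma=(2^i)^{1/4}$ and $\alpha=\frac12(\beta^2+1)\sqrt{2^i}$, fresh initialization ($\mathbf{x}(0)\in\mathcal{X}_0$ arbitrary, $\mathbf{Q}(0)=\mathbf{0}$, and the update producing the period's first decision uses an arbitrary convex differentiable function with gradient norm at most $D$ on $\mathcal{X}_0$ in place of $f^0$), and its decisions $\mathbf{x}(1),\mathbf{x}(2),\ldots$ are played in the successive rounds of the period, the $j$-th round of the period being fed the loss of that global round. Let $\mathbf{y}(s)$ denote the decision played at global round $s$. Then there exist constants $C_1,C_2>0$ depending only on $D,\beta,G,R,\epsilon$ such that for every $T\ge2$ (the horizon not being known to the scheme), every $\mathbf{x}^*\in\mathcal{X}_0$ with $\mathbf{g}(\mathbf{x}^* )\le\mathbf{0}$, and every $k\in\{1,\ldots,m\}$, $$\sum_{s=1}^T f^s(\mathbf{y}(s))-\sum_{s=1}^T f^s(\mathbf{x}^* )\le C_1\sqrt T,\qquad \sum_{s=1}^T g_k(\mathbf{y}(s))\le C_2\log_2 T.$$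
   Context: Setting: $n,m$ positive integers; $\mathcal{X}_0\subset\mathbb{R}^n$ is a nonempty compact convex set; $\mathbf{g}=(g_1,\ldots,g_m)^{\mathsf T}:\mathbb{R}^n\to\mathbb{R}^m$ with each $g_k$ convex and continuous; $f^t$, $t=0,1,2,\ldots$, are convex differentiable real functions on (a neighborhood of) $\mathcal{X}_0$. All norms are Euclidean. Assumption 1: there are constants $D,\beta,G,R>0$ with $\|\nabla f^t(\mathbf{x})\|\le D$ for all $\mathbf{x}\in\mathcal{X}_0$ and all $t\ge0$; $\|\mathbf{g}(\mathbf{x})-\mathbf{g}(\mathbf{y})\|\le\beta\|\mathbf{x}-\mathbf{y}\|$ for all $\mathbf{x},\mathbf{y}\in\mathcal{X}_0$; $\|\mathbf{g}(\mathbf{x})\|\le G$ for all $\mathbf{x}\in\mathcal{X}_0$; $\|\mathbf{x}-\mathbf{y}\|\le R$ for all $\mathbf{x},\mathbf{y}\in\mathcal{X}_0$. Assumption 2 (Slater condition): there exist $\epsilon>0$ and $\hat{\mathbf{x}}\in\mathcal{X}_0$ with $g_k(\hat{\mathbf{x}})\le-\epsilon$ for all $k\in\{1,\ldots,m\}$. Algorithm 1 (parameters $\gamma>0,\alpha>0$): let $\tilde{\mathbf{g}}(\mathbf{x})=\gamma\mathbf{g}(\mathbf{x})$. Choose any $\mathbf{x}(0)\in\mathcal{X}_0$ and set $Q_k(0)=0$ for all $k$. For each $t=0,1,2,\ldots$: set $Q_k(t+1)=\max\{-\tilde g_k(\mathbf{x}(t)),\,Q_k(t)+\tilde g_k(\mathbf{x}(t))\}$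 for $k=1,\ldots,m$, and let $\mathbf{x}(t+1)$ be a minimizer over $\mathbf{x}\in\mathcal{X}_0$ of $[\nabla f^t(\mathbf{x}(t))]^{\mathsf T}(\mathbf{x}-\mathbf{x}(t))+[\mathbf{Q}(t+1)+\tilde{\mathbf{g}}(\mathbf{x}(t))]^{\mathsf T}\tilde{\mathbf{g}}(\mathbf{x})+\alpha\|\mathbf{x}-\mathbf{x}(t)\|^2$, where $\mathbf{Q}(t)=(Q_1(t),\ldots,Q_m(t))^{\mathsf T}$; here $f^t$ denotes the loss function revealed at the end of the algorithm's round $t$. *)

From mathcomp Require Import all_boot.
From Stdlib Require Import Reals.
Open Scope R_scope.

Definition vec (n : nat) := 'I_n -> R.

Definition vadd {n} (x y : vec n) : vec n := fun i => x i + y i.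
Definition vsub {n} (x y : vec n) : vec n := fun i => x i - y i.
Definition vscale {n} (a : R) (x : vec n) : vec n := fun i => a * x i.
Definition dot {n} (x y : vec n) : R := \big[Rplus/0]_(i < n) (x i * y i).
Definition vnorm {n} (x : vec n) : R := sqrt (dot x x).

Definition vcomb {n} (l : R) (x y : vec n) : vec n :=
  vadd (vscale l x) (vscale (1 - l) y).

Definition convex_set {n} (S : vec n -> Prop) : Prop :=
  forall x y l, S x -> S y -> 0 <= l <= 1 -> S (vcomb l x y).

Definition convex_on {n} (S : vec n -> Prop) (f : vec n -> R) : Prop :=
  forall x y l, S x -> S y -> 0 <= l <= 1 ->
    f (vcomb l x y) <= l * f x + (1 - l) * f y.

Definition compact_set {n} (K : vec n -> Prop) : Prop :=
  forall u : nat -> vec n, (forall k, K (u k)) ->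
    exists (phi : nat -> nat) (z : vec n),
      (forall k, (phi k < phi (S k))%nat) /\ K z /\
      forall eps, 0 < eps -> exists N, forall k, (N <= k)%nat ->
        vnorm (vsub (u (phi k)) z) < eps.

Definition continuous_at {n} (f : vec n -> R) (x : vec n) : Prop :=
  forall eps, 0 < eps -> exists del, 0 < del /\
    forall y, vnorm (vsub y x) < del -> Rabs (f y - f x) < eps.

Definition has_grad {n} (f : vec n -> R) (x v : vec n) : Prop :=
  forall eps, 0 < eps -> exists del, 0 < del /\
    forall h, vnorm h < del ->
      Rabs (f (vadd x h) - f x - dot v h) <= eps * vnorm h.

Definition nbhd {n} (S : vec n -> Prop) (del : R) : vec n -> Prop :=
  fun x => exists z, S z /\ vnorm (vsub x z) < del.

Definition cvx_diff_near {n} (X0 : vec n -> Prop) (f : vec n -> R) : Prop :=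
  exists del, 0 < del /\ convex_on (nbhd X0 del) f /\
    forall x, nbhd X0 del x -> exists v, has_grad f x v.

Definition grad_bounded {n} (X0 : vec n -> Prop) (f : vec n -> R) (D : R) : Prop :=
  forall x v, X0 x -> has_grad f x v -> vnorm v <= D.

Definition gvec {n m} (g : 'I_m -> vec n -> R) (x : vec n) : vec m :=
  fun k => g k x.

Definition setting {n m} (X0 : vec n -> Prop) (g : 'I_m -> vec n -> R)
  (f : nat -> vec n -> R) (D beta G Rd eps : R) : Prop :=
  (0 < n)%nat /\ (0 < m)%nat /\
  (exists x, X0 x) /\ compact_set X0 /\ convex_set X0 /\
  (forall k, convex_on (fun _ => True) (g k) /\ forall x, continuous_at (g k) x) /\
  (forall t, cvx_diff_near X0 (f t)) /\
  (* Assumption 1 *)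
  0 < D /\ 0 < beta /\ 0 < G /\ 0 < Rd /\
  (forall t, grad_bounded X0 (f t) D) /\
  (forall x y, X0 x -> X0 y ->
     vnorm (vsub (gvec g x) (gvec g y)) <= beta * vnorm (vsub x y)) /\
  (forall x, X0 x -> vnorm (gvec g x) <= G) /\
  (forall x y, X0 x -> X0 y -> vnorm (vsub x y) <= Rd) /\
  (* Assumption 2 (Slater) *)
  0 < eps /\ (exists xh, X0 xh /\ forall k, g k xh <= - eps).

(* One step of Algorithm 1 with parameters gam, alp: given x(t), Q(t), a
   gradient v of the loss f^t at x(t), the pair (Q(t+1), x(t+1)) is valid. *)
Definition alg1_step {n m} (X0 : vec n -> Prop) (g : 'I_m -> vec n -> R)
  (gam alp : R) (xt : vec n) (Qt : vec m) (v : vec n)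
  (Qt1 : vec m) (xt1 : vec n) : Prop :=
  (forall k, Qt1 k = Rmax (- (gam * g k xt)) (Qt k + gam * g k xt)) /\
  let obj := fun x : vec n =>
    dot v (vsub x xt)
    + dot (fun k => Qt1 k + gam * g k xt) (fun k => gam * g k x)
    + alp * (vnorm (vsub x xt)) ^ 2 in
  X0 xt1 /\ forall x, X0 x -> obj xt1 <= obj x.

(* Global round at which the j-th round (j >= 1) of period i (i >= 1) occurs:
   period i occupies the global rounds 2^i - 1, ..., 2^(i+1) - 2. *)
Definition glob_round (i j : nat) : nat := (2 ^ i - 2 + j)%nat.

(* Loss fed to the local copy of period i at local time t: the arbitrary
   function h in place of f^0, and the global round's loss otherwise. *)
Definition local_loss {n} (f : nat -> vec n -> R) (h : vec n -> R) (i t : nat)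
  : vec n -> R :=
  match t with O => h | _ => f (glob_round i t) end.

(* The doubling-trick scheme: xs i, Qs i are the iterates of the copy of
   Algorithm 1 run in period i (i >= 1), h i the arbitrary initial function,
   and y s the decision played at global round s. *)
Definition doubling_run {n m} (X0 : vec n -> Prop) (g : 'I_m -> vec n -> R)
  (f : nat -> vec n -> R) (D beta : R)
  (h : nat -> vec n -> R) (xs : nat -> nat -> vec n) (Qs : nat -> nat -> vec m)
  (y : nat -> vec n) : Prop :=
  forall i, (1 <= i)%nat ->
    let gam := Rpower (2 ^ i) (1 / 4) in
    let alp := (1 / 2) * (beta ^ 2 + 1) * sqrt (2 ^ i) in
    cvx_diff_near X0 (h i) /\ grad_bounded X0 (h i) D /\
    X0 (xs i O) /\ (forall k, Qs i O k = 0) /\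
    (forall t, (t < 2 ^ i)%nat ->
       exists v, has_grad (local_loss f (h i) i t) (xs i t) v /\
         alg1_step X0 g gam alp (xs i t) (Qs i t) v (Qs i (S t)) (xs i (S t))) /\
    (forall j, (1 <= j <= 2 ^ i)%nat -> y (glob_round i j) = xs i j).

Fixpoint sum1 (a : nat -> R) (T : nat) : R :=
  match T with O => 0 | S T' => sum1 a T' + a T end.

Definition log2 (x : R) : R := ln x / ln 2.

(* Within one period of length N, run with gam = N^(1/4) and alp of order sqrt N,
   Algorithm 1 is analysed through the drift-plus-penalty inequality for the
   Lyapunov function 1/2 |Q(t+1)|^2 - 1/2 |gam g(x(t))|^2.  The proximal step gains
   alp |z - x(t+1)|^2 by strong convexity, which (with the Lipschitz continuity of g)
   absorbs the queue drift and the linearisation error, so the drift plus the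
   instantaneous regret against any feasible z is at most D^2/(2 sqrt N) plus
   telescoping terms: the regret of a period is O(sqrt N).  Against the Slater point
   the same inequality makes |Q| decrease as soon as it exceeds a threshold of order
   gam/eps, hence |Q(t)| = O(gam) throughout; as Q accumulates gam g(x(t)), the
   violation of a period is O(1).  Summing over the periods of the doubling trick
   gives a geometric series in sqrt(2^i), dominated by O(sqrt T), for the regret,
   and log2 T terms of size O(1) for the violation. *)

From HB Require Import structures.
From mathcomp Require Import all_boot zify.
From Stdlib Require Import Reals Lra Psatz FunctionalExtensionality.
Open Scope R_scope.

HB.instance Definition _ := Monoid.isComLaw.Build R 0 Rplus
  (fun a b c => esym (Rplus_assoc a b c)) Rplus_comm Rplus_0_l.

(** * Real sums and Euclidean vectors *)

Section RealSums.
Variables (I : Type) (r : seq I) (P : pred I).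

Lemma ler_sumR (F G : I -> R) : (forall i, P i -> F i <= G i) ->
  \big[Rplus/0]_(i <- r | P i) F i <= \big[Rplus/0]_(i <- r | P i) G i.
Proof.
move=> FG; apply: (big_rec2 (fun a b => a <= b)) => [|i a b Pi ab]; first lra.
by have := FG i Pi; lra.
Qed.

Lemma sumR_ge0 (F : I -> R) : (forall i, P i -> 0 <= F i) ->
  0 <= \big[Rplus/0]_(i <- r | P i) F i.
Proof.
move=> F0; apply: (big_ind (fun a => 0 <= a)) => //; first lra.
by move=> a b; lra.
Qed.

Lemma sumR_distrr (c : R) (F : I -> R) :
  c * \big[Rplus/0]_(i <- r | P i) F i = \big[Rplus/0]_(i <- r | P i) (c * F i).
Proof.
apply: (big_rec2 (fun a b => c * a = b)) => [|i a b _ <-]; ring.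
Qed.

End RealSums.

Lemma sumR_ge_term {I : finType} (F : I -> R) : (forall i, 0 <= F i) -> forall k,
  F k <= \big[Rplus/0]_(i : I) F i.
Proof.
move=> F0 k; rewrite (bigD1 k) //=.
have : 0 <= \big[Rplus/0]_(i | i != k) F i by apply: sumR_ge0 => i _.
lra.
Qed.

Lemma Ropp_le_Rabs (a : R) : - a <= Rabs a.
Proof. by rewrite -Rabs_Ropp; apply: Rle_abs. Qed.

Lemma ln_le x y : 0 < x -> x <= y -> ln x <= ln y.
Proof.
move=> x0 /Rle_lt_or_eq_dec [xy | ->]; last exact: Rle_refl.
exact/Rlt_le/ln_increasing.
Qed.

Lemma Rmin1_bounds (a : R) : 0 < a -> 0 < Rmin 1 a <= 1 /\ Rmin 1 a <= a.
Proof.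
move=> a0; split; last exact: Rmin_r.
by split; [apply: Rmin_glb_lt; lra | exact: Rmin_l].
Qed.

Lemma ge0_of_affine_ge0_near0 (c K : R) :
  (forall l, 0 < l <= 1 -> 0 <= c + l * K) -> 0 <= c.
Proof.
move=> H; apply: le_epsilon => e e0.
have K1 : 0 < Rabs K + 1 by have := Rabs_pos K; lra.
have [l0 ll] := Rmin1_bounds (e / (Rabs K + 1)) (Rdiv_lt_0_compat _ _ e0 K1).
set l := Rmin 1 _ in l0 ll *; clearbody l.
have lK : l * Rabs K <= e.
  have -> : e = e / (Rabs K + 1) * (Rabs K + 1) by field; lra.
  have := Rabs_pos K; nra.
have : l * K <= l * Rabs K by apply: Rmult_le_compat_l; [lra | apply: Rle_abs].
have := H l l0; lra.
Qed.

Lemma quadratic_ge0_discr (a b c : R) : 0 <= b ->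
  (forall t, 0 <= c + 2 * t * a + t * t * b) -> a * a <= c * b.
Proof.
move=> b0 Q; have c0 : 0 <= c by have := Q 0; lra.
case: (Rle_lt_or_eq_dec 0 b b0) => [bpos | b_eq0]; last subst b.
- have := Q (- a / b).
  have -> : c + 2 * (- a / b) * a + - a / b * (- a / b) * b = c - a * a / b
    by field; lra.
  move=> H; have -> : a * a = a * a / b * b by field; lra.
  by apply: Rmult_le_compat_r; lra.
- case: (Req_dec a 0) => [-> | a0]; first lra.
  have := Q (- (c + 1) / (2 * a)).
  have -> : c + 2 * (- (c + 1) / (2 * a)) * a
            + - (c + 1) / (2 * a) * (- (c + 1) / (2 * a)) * 0 = -1 by field.
  lra.
Qed.

Section Vectors.
Context {n : nat}.
Implicit Types x y z : vec n.

Lemma dotC x y : dot x y = dot y x.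
Proof. by rewrite /dot; apply: eq_bigr => i _; ring. Qed.

Lemma dotDl x y z : dot (vadd x y) z = dot x z + dot y z.
Proof. by rewrite /dot -big_split; apply: eq_bigr => i _; rewrite /vadd /=; ring. Qed.

Lemma dotZl a x y : dot (vscale a x) y = a * dot x y.
Proof. by rewrite /dot sumR_distrr; apply: eq_bigr => i _ /=; rewrite /vscale; ring. Qed.

Lemma dotDr x y z : dot z (vadd x y) = dot z x + dot z y.
Proof. by rewrite dotC dotDl !(dotC z). Qed.

Lemma dotZr a x y : dot y (vscale a x) = a * dot y x.
Proof. by rewrite dotC dotZl dotC. Qed.

Lemma dot_self_ge0 x : 0 <= dot x x.
Proof. by apply: sumR_ge0 => i _; nra. Qed.

Lemma dot_self_add x y :
  dot (vadd x y) (vadd x y) = dot x x + 2 * dot x y + dot y y.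
Proof. by rewrite !dotDl !dotDr (dotC y x); ring. Qed.

Lemma vnorm_ge0 x : 0 <= vnorm x.
Proof. exact: sqrt_pos. Qed.

Lemma vnorm_mul_self x : vnorm x * vnorm x = dot x x.
Proof. by rewrite sqrt_sqrt //; apply: dot_self_ge0. Qed.

Lemma vnorm_le_of_dot x c : 0 <= c -> dot x x <= c * c -> vnorm x <= c.
Proof. by move=> c0; rewrite -vnorm_mul_self; have := vnorm_ge0 x; nra. Qed.

Lemma dot_le_of_vnorm {x c} : vnorm x <= c -> dot x x <= c * c.
Proof. by rewrite -vnorm_mul_self; have := vnorm_ge0 x; nra. Qed.

Lemma Rabs_dot_le x y : Rabs (dot x y) <= vnorm x * vnorm y.
Proof.
have cs : dot x y * dot x y <= dot x x * dot y y.
  apply: quadratic_ge0_discr => [|t]; first exact: dot_self_ge0.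
  have := dot_self_ge0 (vadd x (vscale t y)).
  by rewrite dot_self_add dotZl !dotZr; lra.
have p0 : 0 <= vnorm x * vnorm y by apply: Rmult_le_pos; apply: vnorm_ge0.
rewrite -(Rabs_pos_eq _ p0); apply: Rsqr_le_abs_0; rewrite /Rsqr.
by rewrite -!vnorm_mul_self in cs; lra.
Qed.

Lemma dot_le_vnorm x y : dot x y <= vnorm x * vnorm y.
Proof. exact: Rle_trans (Rle_abs _) (Rabs_dot_le x y). Qed.

Lemma vnormD_le x y : vnorm (vadd x y) <= vnorm x + vnorm y.
Proof.
apply: vnorm_le_of_dot; first by have := vnorm_ge0 x; have := vnorm_ge0 y; lra.
by rewrite dot_self_add -!vnorm_mul_self; have := dot_le_vnorm x y; lra.
Qed.

Lemma vnormZ a x : 0 <= a -> vnorm (vscale a x) = a * vnorm x.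
Proof.
move=> a0; rewrite /vnorm dotZl dotZr -Rmult_assoc sqrt_mult_alt; last nra.
by rewrite sqrt_square.
Qed.

Lemma vnorm0 x : (forall i, x i = 0) -> vnorm x = 0.
Proof. by move=> x0; rewrite /vnorm /dot big1 ?sqrt_0 // => i _; rewrite x0; ring. Qed.

Lemma vnorm_le_mono x y : (forall i, Rabs (x i) <= y i) -> vnorm x <= vnorm y.
Proof.
move=> xy; apply: vnorm_le_of_dot; first exact: vnorm_ge0.
rewrite vnorm_mul_self; apply: ler_sumR => i _.
have -> : x i * x i = Rabs (x i) * Rabs (x i) by rewrite -Rabs_mult Rabs_pos_eq //; nra.
by have := xy i; have := Rabs_pos (x i); nra.
Qed.

Lemma vnorm_Rabs x : vnorm (fun i => Rabs (x i)) = vnorm x.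
Proof.
rewrite /vnorm /dot; congr sqrt; apply: eq_bigr => i _.
by rewrite -Rabs_mult Rabs_pos_eq //; nra.
Qed.

Lemma Rabs_coord_le_vnorm x i : Rabs (x i) <= vnorm x.
Proof.
apply: Rabs_le; have := sumR_ge_term (fun j => x j * x j) (fun j => Rle_0_sqr (x j)) i.
by rewrite -/(dot x x) -vnorm_mul_self; have := vnorm_ge0 x; split; nra.
Qed.

Lemma vnorm_le_sum {x} : (forall i, 0 <= x i) -> vnorm x <= \big[Rplus/0]_(i < n) x i.
Proof.
move=> x0; set s := \big[Rplus/0]_(i < n) x i.
have s0 : 0 <= s by apply: sumR_ge0.
apply: vnorm_le_of_dot => //; rewrite {2}/s sumR_distrr /=.
apply: ler_sumR => i _; have := sumR_ge_term _ x0 i; have := x0 i; rewrite -/s; nra.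
Qed.

Lemma vnorm_pow2 x : vnorm x ^ 2 = dot x x.
Proof. by rewrite -vnorm_mul_self /=; ring. Qed.

Lemma vnormB_le x y : vnorm (vsub x y) <= vnorm x + vnorm y.
Proof.
have -> : vnorm y = vnorm (vscale (-1) y) by rewrite /vnorm dotZl dotZr; congr sqrt; ring.
have -> : vsub x y = vadd x (vscale (-1) y).
  by apply: functional_extensionality => i; rewrite /vsub /vadd /vscale; ring.
exact: vnormD_le.
Qed.

End Vectors.

Lemma sum1S (a : nat -> R) M : sum1 a M.+1 = sum1 a M + a M.+1.
Proof. by []. Qed.

Lemma sum1_le (a b : nat -> R) M :
  (forall j, (1 <= j <= M)%nat -> a j <= b j) -> sum1 a M <= sum1 b M.
Proof.
elim: M => [|M IH] ab /=; first lra.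
have := ab M.+1 ltac:(by rewrite /= leqnn).
suff : sum1 a M <= sum1 b M by lra.
by apply: IH => j /andP [j1 jM]; apply: ab; rewrite j1 ltnW.
Qed.

Lemma sum1_ext (a b : nat -> R) M :
  (forall j, (1 <= j <= M)%nat -> a j = b j) -> sum1 a M = sum1 b M.
Proof.
move=> ab; apply: Rle_antisym; apply: sum1_le => j jM; rewrite ab //; lra.
Qed.

Lemma sum1_const (c : R) M : sum1 (fun _ => c) M = INR M * c.
Proof. by elim: M => [|M IH]; [rewrite /=; ring | rewrite S_INR /= IH; ring]. Qed.

Lemma sum1_sub (a b : nat -> R) M : sum1 (fun s => a s - b s) M = sum1 a M - sum1 b M.
Proof. by elim: M => [|M IH] /=; [ring | rewrite IH; ring]. Qed.

Lemma sum1_shift (a : nat -> R) K r :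
  sum1 a (K + r) = sum1 a K + sum1 (fun j => a (K + j)%nat) r.
Proof.
elim: r => [|r IH] /=; first by rewrite addn0; ring.
by rewrite addnS /= IH; ring.
Qed.

(** * Convexity *)

Lemma nbhd_self {n} {S : vec n -> Prop} {del x} : 0 < del -> S x -> nbhd S del x.
Proof. by move=> d0 Sx; exists x; split=> //; rewrite vnorm0 // => i; rewrite /vsub; ring. Qed.

Lemma convex_grad_ineq {n} {S : vec n -> Prop} {f : vec n -> R} {x z v : vec n} :
  convex_on S f -> S x -> S z -> has_grad f x v -> f x + dot v (vsub z x) <= f z.
Proof.
move=> fcvx Sx Sz fgrad; set w := vsub z x.
have w1 : 0 < vnorm w + 1 by have := vnorm_ge0 w; lra.
apply: le_epsilon => e e0.
have [d [d0 fd]] := fgrad (e / (vnorm w + 1)) (Rdiv_lt_0_compat _ _ e0 w1).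
have [l0 ld] := Rmin1_bounds (d / (vnorm w + 1)) (Rdiv_lt_0_compat _ _ d0 w1).
set l := Rmin 1 _ in l0 ld *; clearbody l.
have nlw : vnorm (vscale l w) = l * vnorm w by apply: vnormZ; lra.
have lw : vnorm (vscale l w) < d.
  have -> : d = d / (vnorm w + 1) * (vnorm w + 1) by field; lra.
  by rewrite nlw; nra.
have on_segment : vadd x (vscale l w) = vcomb l z x.
  by apply: functional_extensionality => i; rewrite /vcomb /vadd /vscale /w /vsub; ring.
have := Ropp_le_Rabs (f (vadd x (vscale l w)) - f x - dot v (vscale l w)).
move/(Rle_trans _ _ _)/(_ (fd _ lw)); rewrite on_segment nlw dotZr => lower.
have := fcvx z x l Sz Sx ltac:(lra) => upper.
have ew : e / (vnorm w + 1) * (l * vnorm w) <= l * e.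
  have -> : e / (vnorm w + 1) * (l * vnorm w) = l * e - l * (e / (vnorm w + 1)) by field; lra.
  have : 0 < l * (e / (vnorm w + 1)).
    by apply: Rmult_lt_0_compat; [lra | apply: Rdiv_lt_0_compat].
  lra.
apply: (Rmult_le_reg_l l); lra.
Qed.

(* Three-point inequality of a proximal step: by strong convexity of the quadratic
   term, the minimizer [x1] gains [alp * |x - x1|^2]. *)
Lemma prox_min_ineq {n} {X0 : vec n -> Prop} {phi : vec n -> R} {xt x1 : vec n} {alp : R} :
  convex_set X0 -> convex_on X0 phi -> 0 <= alp -> X0 x1 ->
  (forall x, X0 x -> phi x1 + alp * dot (vsub x1 xt) (vsub x1 xt)
                     <= phi x + alp * dot (vsub x xt) (vsub x xt)) ->
  forall x, X0 x -> phi x1 + alp * dot (vsub x1 xt) (vsub x1 xt)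
                     + alp * dot (vsub x x1) (vsub x x1)
                   <= phi x + alp * dot (vsub x xt) (vsub x xt).
Proof.
move=> Xcvx phicvx alp0 Xx1 x1min x Xx.
set e := vsub x1 xt; set w := vsub x x1.
have -> : vsub x xt = vadd e w.
  by apply: functional_extensionality => i; rewrite /e /w /vadd /vsub; ring.
rewrite dot_self_add.
suff : 0 <= phi x - phi x1 + 2 * alp * dot e w by lra.
apply: (ge0_of_affine_ge0_near0 _ (alp * dot w w)) => l l01.
have Xz : X0 (vcomb l x x1) by apply: Xcvx => //; lra.
have := x1min _ Xz.
have -> : vsub (vcomb l x x1) xt = vadd e (vscale l w).
  by apply: functional_extensionality => i; rewrite /vcomb /e /w /vadd /vscale /vsub; ring.
rewrite dot_self_add dotZr !dotZl dotZr -/e.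
have := phicvx x x1 l Xx Xx1 ltac:(lra).
move=> cvx opt; apply: (Rmult_le_reg_l l); first lra.
rewrite Rmult_0_r; nra.
Qed.

Lemma convex_on_affine_add_dot {n m} (S : vec n -> Prop) (v c : vec n) (p : vec m)
    (gs : 'I_m -> vec n -> R) :
  (forall k, 0 <= p k) -> (forall k, convex_on S (gs k)) ->
  convex_on S (fun y => dot v (vsub y c) + dot p (fun k => gs k y)).
Proof.
move=> p0 gcvx y1 y2 l Sy1 Sy2 l01.
have -> : vsub (vcomb l y1 y2) c = vcomb l (vsub y1 c) (vsub y2 c).
  by apply: functional_extensionality => i; rewrite /vcomb /vadd /vscale /vsub; ring.
have dot_vcomb (k : nat) (u a b : vec k) :
    dot u (vcomb l a b) = l * dot u a + (1 - l) * dot u b.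
  by rewrite /vcomb dotDr !dotZr.
have : dot p (fun k => gs k (vcomb l y1 y2))
       <= dot p (vcomb l (fun k => gs k y1) (fun k => gs k y2)).
  apply: ler_sumR => k _; apply: Rmult_le_compat_l => //.
  exact: gcvx.
by rewrite !dot_vcomb; lra.
Qed.

(** * One period of Algorithm 1 *)

(* One coordinate of the drift of the virtual queue: [q] is Q(t+1)_k, [a] and [A]
   are the scaled constraint values at x(t) and x(t+1), and Q(t+2)_k = max(-A, q+A). *)
Lemma queue_drift_coord q a A :
  1/2 * (Rmax (- A) (q + A) * Rmax (- A) (q + A)) - 1/2 * (A * A)
    - 1/2 * (q * q) + 1/2 * (a * a)
  <= (q + a) * A + 1/2 * ((A - a) * (A - a)).
Proof.
case: (Rle_or_lt (- A) (q + A)) => H.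
- by rewrite Rmax_right //; have := Rle_0_sqr A; rewrite /Rsqr; nra.
- by rewrite Rmax_left; [have := Rle_0_sqr (q + A); rewrite /Rsqr; nra | lra].
Qed.

(* [sN * drift_const] bounds the drift of [|Q|^2 / 2] up to the Slater term
   [- gam eps |Q|]; hence [gam * queue_const] bounds [|Q|] in a period. *)
Definition drift_const (D beta G Rd eps : R) :=
  D * Rd + D ^ 2 / 2 + (beta ^ 2 + 1) * Rd ^ 2 / 2 + G ^ 2 / 2 + eps * G.
Definition queue_const (D beta G Rd eps : R) := drift_const D beta G Rd eps / eps + G.
Definition regret_const (D beta G Rd eps : R) :=
  D ^ 2 / 2 + (beta ^ 2 + 1) * Rd ^ 2 / 2 + queue_const D beta G Rd eps ^ 2 / 2
  + 2 * D * Rd.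
Definition violation_const (D beta G Rd eps : R) := queue_const D beta G Rd eps + G.

Section Constants.
Variable beta : R.
Context {D G Rd eps : R}.
Hypotheses (D_gt0 : 0 < D) (G_gt0 : 0 < G) (Rd_gt0 : 0 < Rd) (eps_gt0 : 0 < eps).

Lemma drift_const_gt0 : 0 < drift_const D beta G Rd eps.
Proof.
have := Rmult_lt_0_compat _ _ D_gt0 Rd_gt0; have := Rmult_lt_0_compat _ _ eps_gt0 G_gt0.
have := pow2_ge_0 D; have := pow2_ge_0 G; have := pow2_ge_0 beta; have := pow2_ge_0 Rd.
by rewrite /drift_const; nra.
Qed.

Lemma queue_const_gt0 : 0 < queue_const D beta G Rd eps.
Proof.
by have := Rdiv_lt_0_compat _ _ drift_const_gt0 eps_gt0; rewrite /queue_const; lra.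
Qed.

Lemma regret_const_gt0 : 0 < regret_const D beta G Rd eps.
Proof.
have := Rmult_lt_0_compat _ _ D_gt0 Rd_gt0; have := pow2_ge_0 (queue_const D beta G Rd eps).
have := pow2_ge_0 D; have := pow2_ge_0 beta; have := pow2_ge_0 Rd.
by rewrite /regret_const; nra.
Qed.

Lemma violation_const_gt0 : 0 < violation_const D beta G Rd eps.
Proof. by have := queue_const_gt0; rewrite /violation_const; lra. Qed.

End Constants.

Section Algorithm1Period.
Context {n m : nat} {X0 : vec n -> Prop} {g : 'I_m -> vec n -> R}.
Context {D beta G Rd eps : R}.
Hypotheses (D_gt0 : 0 < D) (G_gt0 : 0 < G) (Rd_gt0 : 0 < Rd) (eps_gt0 : 0 < eps).
Hypothesis X0_convex : convex_set X0.
Hypothesis g_convex : forall k, convex_on (fun _ => True) (g k).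
Hypothesis g_lipschitz : forall x y, X0 x -> X0 y ->
  vnorm (vsub (gvec g x) (gvec g y)) <= beta * vnorm (vsub x y).
Hypothesis g_bounded : forall x, X0 x -> vnorm (gvec g x) <= G.
Hypothesis X0_diam : forall x y, X0 x -> X0 y -> vnorm (vsub x y) <= Rd.
Context {xh : vec n}.
Hypotheses (xh_in : X0 xh) (xh_slater : forall k, g k xh <= - eps).

(* [N] is the length of the period and [sN] stands for sqrt N. *)
Context {N : nat} {gam sN : R}.
Hypotheses (N_ge2 : (2 <= N)%nat) (gam_gt0 : 0 < gam) (gam_sq : gam * gam = sN)
  (sN_ge1 : 1 <= sN) (N_le_sN_sq : INR N <= sN * sN).
Let alp := 1 / 2 * (beta ^ 2 + 1) * sN.

Context {x : nat -> vec n} {Q : nat -> vec m} {loss : nat -> vec n -> R}.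
Hypotheses (x0_in : X0 (x 0)) (Q0 : forall k, Q 0 k = 0).
Hypothesis alg_step : forall t, (t < N)%nat -> exists v, has_grad (loss t) (x t) v /\
  alg1_step X0 g gam alp (x t) (Q t) v (Q (S t)) (x (S t)).
Hypothesis loss_cvx : forall t, cvx_diff_near X0 (loss t).
Hypothesis loss_grad : forall t, grad_bounded X0 (loss t) D.

Let gtil (y : vec n) : vec m := fun k => gam * g k y.
Let qplus t : vec m := fun k => Q (S t) k + gam * g k (x t).
Let lyap t := 1 / 2 * dot (Q (S t)) (Q (S t)) - 1 / 2 * dot (gtil (x t)) (gtil (x t)).

Lemma alp_ge0 : 0 <= alp.
Proof. by rewrite /alp; nra. Qed.

Lemma x_in {t} : (t <= N)%nat -> X0 (x t).
Proof. by case: t => // t tN; have [v [_ [_ []]]] := alg_step t tN. Qed.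

Lemma Q_succ t k : (t < N)%nat ->
  Q (S t) k = Rmax (- (gam * g k (x t))) (Q t k + gam * g k (x t)).
Proof. by move=> tN; have [v [_ [QS _]]] := alg_step t tN. Qed.

Lemma qplus_ge0 {t} k : (t < N)%nat -> 0 <= qplus t k.
Proof.
move=> tN; rewrite /qplus Q_succ //.
by have := Rmax_l (- (gam * g k (x t))) (Q t k + gam * g k (x t)); lra.
Qed.

Lemma Q_ge0 {t} k : (t <= N)%nat -> 0 <= Q t k.
Proof.
elim: t => [|t IH] tN; first by rewrite Q0; lra.
rewrite Q_succ //; have := IH (ltnW tN).
case: (Rle_or_lt 0 (gam * g k (x t))) => a0 q0.
- by apply: Rle_trans (Rmax_r _ _); lra.
- by apply: Rle_trans (Rmax_l _ _); lra.
Qed.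

Lemma Q_succ_ge t k : (t < N)%nat -> Q t k + gam * g k (x t) <= Q (S t) k.
Proof. by move=> tN; rewrite Q_succ //; apply: Rmax_r. Qed.

Lemma loss_grad_ineq {t y z v} : X0 y -> X0 z -> has_grad (loss t) y v ->
  loss t y + dot v (vsub z y) <= loss t z.
Proof.
have [del [del0 [cvx _]]] := loss_cvx t.
by move=> Xy Xz; apply: (convex_grad_ineq cvx); apply: nbhd_self.
Qed.

Lemma loss_diff_le t y z : X0 y -> X0 z -> loss t y - loss t z <= D * Rd.
Proof.
move=> Xy Xz; have [del [del0 [_ diff]]] := loss_cvx t.
have [v v_grad] := diff y (nbhd_self del0 Xy).
have := loss_grad_ineq Xy Xz v_grad; have := loss_grad _ _ _ Xy v_grad.
have := Rabs_dot_le v (vsub z y); have := Ropp_le_Rabs (dot v (vsub z y)).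
have := X0_diam _ _ Xz Xy; have := vnorm_ge0 v; have := vnorm_ge0 (vsub z y).
nra.
Qed.

Lemma prox_step {t} : (t < N)%nat -> exists v, has_grad (loss t) (x t) v /\ vnorm v <= D /\
  forall z, X0 z ->
    dot v (vsub (x (S t)) (x t)) + dot (qplus t) (gtil (x (S t)))
    + alp * dot (vsub (x (S t)) (x t)) (vsub (x (S t)) (x t))
    + alp * dot (vsub z (x (S t))) (vsub z (x (S t)))
    <= dot v (vsub z (x t)) + dot (qplus t) (gtil z)
       + alp * dot (vsub z (x t)) (vsub z (x t)).
Proof.
move=> tN; have [v [v_grad [_ [Xx1 x1min]]]] := alg_step t tN.
exists v; split=> //; split; first exact: loss_grad _ _ _ (x_in (ltnW tN)) v_grad.
apply: (prox_min_ineq X0_convex _ alp_ge0 Xx1).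
- apply: convex_on_affine_add_dot => [k|k y1 y2 l _ _ l01].
    exact: qplus_ge0.
  have := g_convex k y1 y2 l I I l01; nra.
- by move=> z Xz; have := x1min z Xz; rewrite !vnorm_pow2.
Qed.

Lemma lyap_drift {t} : (S t < N)%nat ->
  lyap (S t) - lyap t <= dot (qplus t) (gtil (x (S t)))
    + 1 / 2 * dot (vsub (gtil (x (S t))) (gtil (x t))) (vsub (gtil (x (S t))) (gtil (x t))).
Proof.
move=> tN; have sub_mul (u w : R) : u - w = u + (-1) * w by ring.
rewrite /lyap /dot !sub_mul !sumR_distrr -!big_split !sumR_distrr -!big_split.
apply: ler_sumR => k _ /=; rewrite (Q_succ (S t) k tN) /qplus /gtil /vsub.
by have := queue_drift_coord (Q (S t) k) (gam * g k (x t)) (gam * g k (x (S t))); lra.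
Qed.

Lemma gtil_vnorm_le {y} : X0 y -> vnorm (gtil y) <= gam * G.
Proof.
move=> Xy; rewrite (vnormZ gam (gvec g y)); last lra.
by apply: Rmult_le_compat_l; [lra | exact: g_bounded].
Qed.

Lemma gtil_diff_le {y z} : X0 y -> X0 z ->
  dot (vsub (gtil y) (gtil z)) (vsub (gtil y) (gtil z))
  <= sN * beta ^ 2 * dot (vsub y z) (vsub y z).
Proof.
move=> Xy Xz.
have -> : vsub (gtil y) (gtil z) = vscale gam (vsub (gvec g y) (gvec g z)).
  by apply: functional_extensionality => k; rewrite /gtil /vsub /vscale /gvec; ring.
rewrite dotZl dotZr -Rmult_assoc gam_sq.
have := dot_le_of_vnorm (g_lipschitz _ _ Xy Xz).
rewrite -vnorm_mul_self -[dot (vsub y z) _]vnorm_mul_self.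
have := Rle_0_sqr beta; rewrite /Rsqr; nra.
Qed.

Lemma drift_plus_penalty {t z} : (S t < N)%nat -> X0 z ->
  lyap (S t) - lyap t + (loss t (x t) - loss t z)
  <= D ^ 2 / (2 * sN) + dot (qplus t) (gtil z)
     + alp * (dot (vsub z (x t)) (vsub z (x t)) - dot (vsub z (x (S t))) (vsub z (x (S t)))).
Proof.
move=> tN Xz; have Xt := x_in (ltnW (ltnW tN)); have Xt1 := x_in (ltnW tN).
have [v [v_grad [vD prox]]] := prox_step (ltnW tN).
have := prox z Xz; have := lyap_drift tN; have := loss_grad_ineq Xt Xz v_grad.
have := gtil_diff_le Xt1 Xt.
set d := vsub (x (S t)) (x t).
have vd : - dot v d <= D * vnorm d.
  have := Rmult_le_compat_r _ _ _ (vnorm_ge0 d) vD.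
  have := Ropp_le_Rabs (dot v d); have := Rabs_dot_le v d; lra.
have young : D * vnorm d - 1 / 2 * sN * (vnorm d * vnorm d) <= D ^ 2 / (2 * sN).
  apply: (Rmult_le_reg_l (2 * sN)); first lra.
  have -> : 2 * sN * (D ^ 2 / (2 * sN)) = D ^ 2 by field; lra.
  by have := Rle_0_sqr (D - sN * vnorm d); rewrite /Rsqr; nra.
rewrite vnorm_mul_self in young.
rewrite /alp; nra.
Qed.

Lemma qplus_dot_gtil_le {t z c} : (t < N)%nat -> 0 <= c -> (forall k, g k z <= - c) ->
  dot (qplus t) (gtil z) <= - (gam * c) * vnorm (qplus t).
Proof.
move=> tN c0 gz.
have sum_le : dot (qplus t) (gtil z) <= - (gam * c) * \big[Rplus/0]_(k < m) qplus t k.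
  rewrite /dot sumR_distrr; apply: ler_sumR => k _.
  have : gam * g k z <= - (gam * c) by have := gz k; nra.
  by have := qplus_ge0 k tN; rewrite /gtil; nra.
have := vnorm_le_sum (fun k => qplus_ge0 k tN).
have : 0 <= gam * c by nra.
nra.
Qed.

Lemma Q_vnorm_le_qplus {t} : (t < N)%nat -> vnorm (Q (S t)) <= vnorm (qplus t) + gam * G.
Proof.
move=> tN; have -> : Q (S t) = vsub (qplus t) (gtil (x t)).
  by apply: functional_extensionality => k; rewrite /vsub /qplus /gtil; ring.
by have := vnormB_le (qplus t) (gtil (x t)); have := gtil_vnorm_le (x_in (ltnW tN)); lra.
Qed.

Lemma Q_vnorm_succ_le {t} : (t < N)%nat -> vnorm (Q (S t)) <= vnorm (Q t) + gam * G.
Proof.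
move=> tN.
have Q1_le : vnorm (Q (S t)) <= vnorm (vadd (Q t) (fun k => Rabs (gtil (x t) k))).
  apply: vnorm_le_mono => k; rewrite Rabs_pos_eq; last exact: Q_ge0.
  have := Q_ge0 k (ltnW tN); have := Rle_abs (gtil (x t) k).
  have := Ropp_le_Rabs (gtil (x t) k).
  by rewrite Q_succ // /vadd /gtil => ? ? ?; apply: Rmax_lub; lra.
have := vnormD_le (Q t) (fun k => Rabs (gtil (x t) k)); rewrite vnorm_Rabs.
by have := gtil_vnorm_le (x_in (ltnW tN)); lra.
Qed.

Lemma Q_sq_step {t} : (S t < N)%nat ->
  1 / 2 * dot (Q (S (S t))) (Q (S (S t)))
  <= 1 / 2 * dot (Q (S t)) (Q (S t)) + sN * drift_const D beta G Rd eps
     - gam * eps * vnorm (Q (S t)).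
Proof.
move=> tN; have Xt := x_in (ltnW (ltnW tN)); have Xt1 := x_in (ltnW tN).
have := drift_plus_penalty tN xh_in; rewrite /lyap.
have := loss_diff_le t _ _ xh_in Xt.
have := qplus_dot_gtil_le (ltnW tN) (Rlt_le _ _ eps_gt0) xh_slater.
have := dot_le_of_vnorm (gtil_vnorm_le Xt1); have := dot_self_ge0 (gtil (x t)).
have dist : alp * (dot (vsub xh (x t)) (vsub xh (x t))
                   - dot (vsub xh (x (S t))) (vsub xh (x (S t))))
            <= sN * ((beta ^ 2 + 1) * Rd ^ 2 / 2).
  have := dot_le_of_vnorm (X0_diam _ _ xh_in Xt).
  have := dot_self_ge0 (vsub xh (x (S t))); have := alp_ge0.
  by rewrite /alp; nra.
have DD : D ^ 2 / (2 * sN) <= sN * (D ^ 2 / 2).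
  apply: (Rmult_le_reg_l (2 * sN)); first lra.
  have -> : 2 * sN * (D ^ 2 / (2 * sN)) = D ^ 2 by field; lra.
  have -> : 2 * sN * (sN * (D ^ 2 / 2)) = sN * sN * D ^ 2 by field.
  have s1 : 1 <= sN * sN by nra.
  by have := pow2_ge_0 D; nra.
have DR : D * Rd <= sN * (D * Rd).
  by have := Rmult_lt_0_compat _ _ D_gt0 Rd_gt0; nra.
have slack : - (gam * eps) * vnorm (qplus t)
              <= - (gam * eps) * vnorm (Q (S t)) + sN * (eps * G).
  have := Rmult_le_compat_l _ _ _ (Rlt_le _ _ (Rmult_lt_0_compat _ _ gam_gt0 eps_gt0))
    (Q_vnorm_le_qplus (ltnW tN)).
  by rewrite -gam_sq; lra.
have GG : gam * G * (gam * G) = sN * G ^ 2 by rewrite -gam_sq; ring.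
by rewrite /drift_const; lra.
Qed.

Lemma Q_vnorm_bound t : (1 <= t <= N)%nat ->
  vnorm (Q t) <= gam * queue_const D beta G Rd eps.
Proof.
have c0 := drift_const_gt0 beta D_gt0 G_gt0 Rd_gt0 eps_gt0.
have GB : gam * G <= gam * queue_const D beta G Rd eps.
  apply: Rmult_le_compat_l; first lra.
  by have := Rdiv_lt_0_compat _ _ c0 eps_gt0; rewrite /queue_const; lra.
elim: t => [|[|t] IH] // /andP [_ tN].
- have := Q_vnorm_succ_le tN; rewrite (vnorm0 (Q 0)) //; lra.
- have IH1 := IH (ltnW tN); set q := vnorm (Q (S t)) in IH1 *.
  have q0 : 0 <= q by apply: vnorm_ge0.
  (* Above the threshold [gam * drift_const / eps] the norm of [Q] decreases;
     below it, one step adds at most [gam * G]. *)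
  case: (Rle_or_lt (sN * drift_const D beta G Rd eps) (gam * eps * q)) => drift.
  + apply: Rle_trans IH1; apply: vnorm_le_of_dot => //.
    by have := Q_sq_step tN; rewrite -(vnorm_mul_self (Q t.+1)) -/q; lra.
  + have := Q_vnorm_succ_le tN; rewrite -/q.
    have : q < gam * (drift_const D beta G Rd eps / eps).
      apply: (Rmult_lt_reg_l (gam * eps)); first exact: Rmult_lt_0_compat.
      by have -> : gam * eps * (gam * (drift_const D beta G Rd eps / eps))
                = sN * drift_const D beta G Rd eps by rewrite -gam_sq; field; lra.
    by rewrite /queue_const; lra.
Qed.

Lemma Q_telescope {K} k : (K < N)%nat ->
  gam * sum1 (fun j => g k (x j)) K <= Q (S K) k - Q 1 k.
Proof.
elim: K => [|K IH] KN /=; first lra.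
by have := IH (ltnW KN); have := Q_succ_ge _ k KN; lra.
Qed.

Lemma period_violation_bound {M} k : (M <= N)%nat ->
  sum1 (fun j => g k (x j)) M <= violation_const D beta G Rd eps.
Proof.
case: M => [|K] KN /=.
  by have := violation_const_gt0 beta D_gt0 G_gt0 Rd_gt0 eps_gt0; lra.
have QB := Q_vnorm_bound K.+1 KN.
have := Rabs_coord_le_vnorm (Q K.+1) k; have := Rle_abs (Q K.+1 k).
have := Q_telescope k KN; have := Q_ge0 k (ltnW N_ge2) => Q1 tele abs coord.
have sumB : sum1 (fun j => g k (x j)) K <= queue_const D beta G Rd eps.
  by apply: (Rmult_le_reg_l gam) => //; lra.
have := g_bounded _ (x_in KN); have := Rabs_coord_le_vnorm (gvec g (x K.+1)) k.
by have := Rle_abs (g k (x K.+1)); rewrite /violation_const /gvec; lra.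
Qed.

Lemma lyap_ge0 {t} : (t < N)%nat -> 0 <= lyap t.
Proof.
move=> tN; rewrite /lyap.
suff : dot (gtil (x t)) (gtil (x t)) <= dot (Q (S t)) (Q (S t)) by lra.
apply: ler_sumR => k _; set a := gtil (x t) k.
have Qa : Rabs a <= Q (S t) k.
  rewrite Q_succ //; have := Q_ge0 k (ltnW tN); rewrite /a /gtil.
  case: (Rle_or_lt 0 (gam * g k (x t))) => a0 q0.
  - by rewrite Rabs_pos_eq //; apply: Rle_trans (Rmax_r _ _); lra.
  - by rewrite Rabs_left //; apply: Rmax_l.
have -> : a * a = Rabs a * Rabs a by rewrite -Rabs_mult Rabs_pos_eq //; nra.
by have := Rabs_pos a; nra.
Qed.

Lemma regret_telescope {K z} : (S K < N)%nat -> X0 z -> (forall k, g k z <= 0) ->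
  sum1 (fun j => loss j (x j) - loss j z) K
  <= INR K * (D ^ 2 / (2 * sN))
     + alp * (dot (vsub z (x 1)) (vsub z (x 1)) - dot (vsub z (x (S K))) (vsub z (x (S K))))
     + lyap 1 - lyap (S K).
Proof.
move=> + Xz gz; elim: K => [|K IH] KN; first by rewrite /=; lra.
have := IH (ltnW KN); have := drift_plus_penalty KN Xz.
have := qplus_dot_gtil_le (ltnW KN) (Rle_refl 0) (fun k => ltac:(rewrite Ropp_0; exact: gz)).
by rewrite S_INR /=; lra.
Qed.

Lemma regret_prefix_bound {K z} : (S K < N)%nat -> X0 z -> (forall k, g k z <= 0) ->
  sum1 (fun j => loss j (x j) - loss j z) K
  <= sN * (D ^ 2 / 2 + (beta ^ 2 + 1) * Rd ^ 2 / 2 + queue_const D beta G Rd eps ^ 2 / 2).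
Proof.
move=> KN Xz gz; have := regret_telescope KN Xz gz.
have := lyap_ge0 KN.
have step_term : INR K * (D ^ 2 / (2 * sN)) <= sN * (D ^ 2 / 2).
  have KsN : INR K <= sN * sN.
    by apply: Rle_trans N_le_sN_sq; apply: le_INR; apply/leP; apply: ltnW; apply: ltnW.
  have D2 : 0 <= D ^ 2 / (2 * sN).
    by apply: Rmult_le_pos; [apply: pow2_ge_0 | apply: Rlt_le; apply: Rinv_0_lt_compat; lra].
  have := Rmult_le_compat_r _ _ _ D2 KsN.
  by have -> : sN * sN * (D ^ 2 / (2 * sN)) = sN * (D ^ 2 / 2) by field; lra.
have dist_term : alp * (dot (vsub z (x 1)) (vsub z (x 1))
                        - dot (vsub z (x (S K))) (vsub z (x (S K))))
                 <= sN * ((beta ^ 2 + 1) * Rd ^ 2 / 2).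
  have := dot_le_of_vnorm (X0_diam _ _ Xz (x_in (ltnW N_ge2))).
  have := dot_self_ge0 (vsub z (x (S K))); have := alp_ge0.
  by rewrite /alp; nra.
have lyap1 : lyap 1 <= sN * (queue_const D beta G Rd eps ^ 2 / 2).
  have := dot_le_of_vnorm (Q_vnorm_bound 2 N_ge2); have := dot_self_ge0 (gtil (x 1)).
  by rewrite /lyap -gam_sq; nra.
lra.
Qed.

Lemma period_regret_bound {M z} : (M <= N)%nat -> X0 z -> (forall k, g k z <= 0) ->
  sum1 (fun j => loss j (x j) - loss j z) M <= sN * regret_const D beta G Rd eps.
Proof.
(* The telescoped bound needs the two iterates following its last round, so the
   last (at most two) rounds of the period are bounded crudely by [D * Rd]. *)
move=> MN Xz gz; set K := minn M (N - 2).
have -> : M = (K + (M - K))%nat by rewrite /K; lia.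
rewrite sum1_shift.
have prefix := regret_prefix_bound (K := K) ltac:(rewrite /K; lia) Xz gz.
have tail : sum1 (fun j => loss (K + j)%nat (x (K + j)%nat) - loss (K + j)%nat z) (M - K)
            <= INR (M - K) * (D * Rd).
  rewrite -sum1_const; apply: sum1_le => j jMK.
  by apply: loss_diff_le => //; apply: x_in; rewrite /K; lia.
have : INR (M - K) <= 2 by apply: (le_INR _ 2); apply/leP; rewrite /K; lia.
have DR : 0 < D * Rd by apply: Rmult_lt_0_compat.
rewrite /regret_const; nra.
Qed.

End Algorithm1Period.

(** * The doubling trick *)

Lemma INR_pow2 p : INR (2 ^ p)%nat = 2 ^ p.
Proof. by rewrite pow_INR. Qed.

Lemma pow2_gt0 p : (0 < 2 ^ p)%nat.
Proof. by have := Nat.pow_nonzero 2 p; lia. Qed.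

Lemma pow2_ge2 p : (2 <= 2 ^ p.+1)%nat.
Proof. by rewrite Nat.pow_succ_r'; have := pow2_gt0 p; lia. Qed.

Lemma sum1_periods (a : nat -> R) p M :
  sum1 a (2 ^ p.+1 - 2 + M)
  = sum1 (fun i => sum1 (fun j => a (glob_round i j)) (2 ^ i)) p
    + sum1 (fun j => a (glob_round p.+1 j)) M.
Proof.
elim: p M => [|p IH] M; first by rewrite /= Rplus_0_l.
have split_round : (2 ^ p.+2 - 2 = 2 ^ p.+1 - 2 + 2 ^ p.+1)%nat.
  by rewrite [(2 ^ p.+2)%nat]Nat.pow_succ_r'; have := pow2_ge2 p; lia.
rewrite split_round sum1_shift IH sum1S; congr (_ + _).
by apply: sum1_ext => j _; rewrite /glob_round split_round.
Qed.

Lemma round_in_period {T} : (1 <= T)%nat ->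
  exists p M, (1 <= M <= 2 ^ p.+1)%nat /\ T = (2 ^ p.+1 - 2 + M)%nat.
Proof.
elim: T => [|[|T] IH] // _; first by exists 0%nat, 1%nat.
have [p [M [/andP [M1 Mp] ->]]] := IH isT.
case: (ltnP M (2 ^ p.+1)) => Mlt.
- by exists p, M.+1; split; [apply/andP | have := pow2_ge2 p; lia].
- exists p.+1, 1%nat; split; first by have := pow2_gt0 p.+2; lia.
  by rewrite [(2 ^ p.+2)%nat]Nat.pow_succ_r'; have := pow2_ge2 p; lia.
Qed.

Lemma sum1_le_periods {a} (b : nat -> R) {p M} :
  (forall i M', (1 <= i)%nat -> (M' <= 2 ^ i)%nat ->
     sum1 (fun j => a (glob_round i j)) M' <= b i) ->
  (M <= 2 ^ p.+1)%nat -> sum1 a (2 ^ p.+1 - 2 + M) <= sum1 b p.+1.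
Proof.
move=> per Mp; rewrite sum1_periods sum1S; apply: Rplus_le_compat; last exact: per.
by apply: sum1_le => i /andP [i1 _]; apply: per.
Qed.

Lemma sum1_sqrt_pow2_le c q : 0 <= c ->
  sum1 (fun i => c * sqrt (2 ^ i)) q <= 4 * c * sqrt (2 ^ q).
Proof.
move=> c0; elim: q => [|q IH] /=; first by have := sqrt_pos 1; nra.
rewrite sqrt_mult; [|lra|apply: pow_le; lra].
have s2 : sqrt 2 * sqrt 2 = 2 by apply: sqrt_sqrt; lra.
have := sqrt_pos 2; have := sqrt_pos (2 ^ q).
have : 0 <= c * sqrt (2 ^ q) by apply: Rmult_le_pos => //; apply: sqrt_pos.
nra.
Qed.

(* Per-period bounds of order sqrt(2^i) sum to a geometric series dominated by
   its last term, of order sqrt T. *)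
Lemma doubling_sqrt_bound {a : nat -> R} {c} : 0 <= c ->
  (forall i M, (1 <= i)%nat -> (M <= 2 ^ i)%nat ->
     sum1 (fun j => a (glob_round i j)) M <= c * sqrt (2 ^ i)) ->
  forall T, (1 <= T)%nat -> sum1 a T <= 6 * c * sqrt (INR T).
Proof.
move=> c0 per T T1; have [p [M [/andP [M1 Mp] ET]]] := round_in_period T1.
have := sum1_le_periods (fun i => c * sqrt (2 ^ i)) per Mp; rewrite -ET.
have := sum1_sqrt_pow2_le c p.+1 c0.
have pT : 2 ^ p.+1 <= 2 * INR T.
  rewrite -INR_pow2 -[2](INR_IZR_INZ 2) -mult_INR; apply: le_INR; apply/leP.
  by rewrite ET Nat.pow_succ_r'; lia.
have sqT : sqrt (2 ^ p.+1) <= sqrt 2 * sqrt (INR T).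
  by rewrite -sqrt_mult; [apply: sqrt_le_1_alt | lra | apply: pos_INR].
have s2 : sqrt 2 <= 3 / 2.
  have : sqrt 2 * sqrt 2 = 2 by apply: sqrt_sqrt; lra.
  by have := sqrt_pos 2; nra.
have := Rmult_le_compat_l (4 * c) _ _ ltac:(lra) sqT.
have := Rmult_le_compat_r (4 * c * sqrt (INR T)) _ _ ltac:(have := sqrt_pos (INR T); nra) s2.
lra.
Qed.

Lemma doubling_log_bound {a : nat -> R} {c} : 0 <= c ->
  (forall i M, (1 <= i)%nat -> (M <= 2 ^ i)%nat ->
     sum1 (fun j => a (glob_round i j)) M <= c) ->
  forall T, (2 <= T)%nat -> sum1 a T <= 2 * c * log2 (INR T).
Proof.
move=> c0 per T T2; have [p [M [/andP [M1 Mp] ET]]] := round_in_period (ltnW T2).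
have := sum1_le_periods (fun=> c) per Mp; rewrite -ET sum1_const.
have ln2 : 0 < ln 2 by rewrite -ln_1; apply: ln_increasing; lra.
have T2R : 2 <= INR T by apply: (le_INR 2); apply/leP.
have pT : INR p * ln 2 <= ln (INR T).
  rewrite -ln_pow; last lra.
  apply: ln_le; first by apply: pow_lt; lra.
  rewrite -INR_pow2; apply: le_INR; apply/leP.
  by move: ET; rewrite Nat.pow_succ_r'; have := pow2_gt0 p; lia.
have : ln 2 <= ln (INR T) by apply: ln_le; lra.
have -> : 2 * c * log2 (INR T) = c * (2 * ln (INR T) / ln 2) by rewrite /log2; field; lra.
move=> lnT; rewrite S_INR.
move/Rle_trans; apply; rewrite Rmult_comm.
apply: Rmult_le_compat_l => //.
apply: (Rmult_le_reg_r (ln 2)) => //.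
have -> : 2 * ln (INR T) / ln 2 * ln 2 = 2 * ln (INR T) by field; lra.
lra.
Qed.

Lemma doubling_period_bounds {n m} {X0 : vec n -> Prop} {g : 'I_m -> vec n -> R}
    {f : nat -> vec n -> R} {D beta G Rd eps : R} {h xs Qs y} {xstar : vec n} (k : 'I_m) :
  setting X0 g f D beta G Rd eps -> doubling_run X0 g f D beta h xs Qs y ->
  X0 xstar -> (forall k', g k' xstar <= 0) ->
  forall i M, (1 <= i)%nat -> (M <= 2 ^ i)%nat ->
    sum1 (fun j => f (glob_round i j) (y (glob_round i j))
                   - f (glob_round i j) xstar) M
      <= regret_const D beta G Rd eps * sqrt (2 ^ i)
    /\ sum1 (fun j => g k (y (glob_round i j))) M <= violation_const D beta G Rd eps.
Proof.
move=> Hset Hrun Xs gs i M i1 Mi.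
have [_ [_ [_ [_ [Xcvx [gcvx [fcvx [D0 [_ [G0 [Rd0 [fgrad [glip [gbd [diam
       [e0 [xh [Xxh slater]]]]]]]]]]]]]]]]]] := Hset.
have [hcvx [hgrad [x0 [Q0 [steps played]]]]] := Hrun i i1.
have gcvx' k' : convex_on (fun _ => True) (g k') by case: (gcvx k').
have N2 : (2 <= 2 ^ i)%nat by rewrite -(prednK i1); apply: pow2_ge2.
have pow_ge1 : 1 <= 2 ^ i by apply: pow_R1_Rle; lra.
have gam0 : 0 < Rpower (2 ^ i) (1 / 4) by apply: exp_pos.
have gam_sq : Rpower (2 ^ i) (1 / 4) * Rpower (2 ^ i) (1 / 4) = sqrt (2 ^ i).
  by rewrite -Rpower_plus -Rpower_sqrt; [congr Rpower; field | lra].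
have sN1 : 1 <= sqrt (2 ^ i) by rewrite -sqrt_1; apply: sqrt_le_1_alt.
have NsN : INR (2 ^ i)%nat <= sqrt (2 ^ i) * sqrt (2 ^ i).
  by rewrite sqrt_sqrt ?INR_pow2; lra.
have lcvx t : cvx_diff_near X0 (local_loss f (h i) i t) by case: t => [|t] /=.
have lgrad t : grad_bounded X0 (local_loss f (h i) i t) D by case: t => [|t] /=.
have played_loss j : (1 <= j <= 2 ^ i)%nat ->
    y (glob_round i j) = xs i j /\ local_loss f (h i) i j = f (glob_round i j).
  by move=> ji; split; [exact: played | case: j ji].
have inM j : (1 <= j <= M)%nat -> (1 <= j <= 2 ^ i)%nat.
  by move=> /andP [j1 jM]; rewrite j1 (leq_trans jM Mi).
split.
- rewrite (sum1_ext _ (fun j => local_loss f (h i) i j (xs i j)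
                                 - local_loss f (h i) i j xstar)).
    rewrite Rmult_comm; exact: (period_regret_bound D0 G0 Rd0 e0 Xcvx gcvx' glip gbd diam
      Xxh slater N2 gam0 gam_sq sN1 NsN x0 Q0 steps lcvx lgrad Mi Xs gs).
  by move=> j /inM /played_loss [-> ->].
- rewrite (sum1_ext _ (fun j => g k (xs i j))).
    exact: (period_violation_bound D0 G0 Rd0 e0 Xcvx gcvx' glip gbd diam
      Xxh slater N2 gam0 gam_sq sN1 x0 Q0 steps lcvx lgrad k Mi).
  by move=> j /inM /played_loss [-> _].
Qed.

Theorem theorem3 :
  forall D beta G Rd eps : R,
    0 < D -> 0 < beta -> 0 < G -> 0 < Rd -> 0 < eps ->
  exists C1 C2 : R, 0 < C1 /\ 0 < C2 /\
  forall (n m : nat) (X0 : vec n -> Prop) (g : 'I_m -> vec n -> R)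
         (f : nat -> vec n -> R),
    setting X0 g f D beta G Rd eps ->
  forall (h : nat -> vec n -> R) (xs : nat -> nat -> vec n)
         (Qs : nat -> nat -> vec m) (y : nat -> vec n),
    doubling_run X0 g f D beta h xs Qs y ->
  forall (T : nat) (xstar : vec n) (k : 'I_m),
    (2 <= T)%nat -> X0 xstar -> (forall k', g k' xstar <= 0) ->
    sum1 (fun s => f s (y s)) T - sum1 (fun s => f s xstar) T
      <= C1 * sqrt (INR T)
    /\ sum1 (fun s => g k (y s)) T <= C2 * log2 (INR T).
Proof.
move=> D beta G Rd eps D0 _ G0 Rd0 e0.
have c1 : 0 < regret_const D beta G Rd eps by exact: regret_const_gt0.
have c2 : 0 < violation_const D beta G Rd eps by exact: violation_const_gt0.
exists (6 * regret_const D beta G Rd eps), (2 * violation_const D beta G Rd eps).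
split; first lra; split; first lra.
move=> n m X0 g f Hset h xs Qs y Hrun T xstar k T2 Xs gs.
have per := doubling_period_bounds k Hset Hrun Xs gs.
split.
- rewrite -sum1_sub; apply: (doubling_sqrt_bound (Rlt_le _ _ c1)) (ltnW T2).
  by move=> i M i1 Mi; case: (per i M i1 Mi).
- apply: (doubling_log_bound (Rlt_le _ _ c2)) T2.
  by move=> i M i1 Mi; case: (per i M i1 Mi).
Qed.
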